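(* Let $\mathcal{A}=(Q,\gamma,W)$ be a one-dimensional pVASS. Every configuration of $\mathcal{A}$ can reach a configuration belonging to some region of $\mathcal{A}$ in at most $11|Q|^4$ transitions of $\mathcal{M}_\mathcal{A}$.
   Context: A pVASS of dimension $d\ge1$ is $\mathcal{A}=(Q,\gamma,W)$: $Q$ finite set of control states, $\gamma\subseteq Q\times\{-1,0,1\}^d\times Q$ rules, $W:\gamma\to\mathbb{N}^+$ weights. Standing assumption: the graph on $Q$ with an edge $p\to q$ iff some rule $(p,\kappa,q)$ exists is weakly connected, and for all $p,q$ at most one rule $(p,\kappa,q)$ exists. For $d=1$ configurations are $p(k)\in Q\times\mathbb{N}$. A rule $(p,\kappa,q)$ is enabled in $p(k)$ unless $\kappa=-1$ and $k=0$. The Markov chain $\mathcal{M}_\mathcal{A}$ on configurations: if no rule is enabled in $p(k)$ there is only the self-loop with probability 1; otherwise each enabled rule $(p,\kappa,q)$ of weight $\ell$ gives $p(k)\to q(k+\kappa)$ with probability $\ell/T$, $T$ the total weight of enabled rules. $\mathit{post}^*(X)$/$\mathit{pre}^*(X)$ are the sets of configurations reachable from / able to reach $X$. $\mathscr{C}_\mathcal{A}$ is the finite Markov chain on $Q$ with $p\to q$ with probability $W((p,\kappa,q))/T_p$ ($T_p$ total weight of rules with source $p$); BSCC = bottom strongly connected component. Regions: for $p\in Q$, the type I region determined by $p$ is $\mathit{post}^*(p(0))$ if this set is finite and contained in $\mathit{pre}^*(p(0))$, and $\emptyset$ otherwise. For $p$ in a BSCC $S$ of $\mathscr{C}_\mathcal{A}$,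 the type II region determined by $p$ is $\mathit{post}^*(p(0))$ if this set is infinite and contained in $\mathit{pre}^*(p(0))$, and $\emptyset$ otherwise. For a BSCC $S$, the type III region determined by $S$ is the set of all $p(k)$ with $p\in S$, $k\ge1$, that cannot reach any configuration with zero counter. Let $R_I(S)$, $R_{II}(S)$ be the unions of the type I, resp. type II, regions determined by states of $S$, and $D(S)=\big((S\times\mathbb{N})\cap\mathit{pre}^*(R_I(S))\big)\setminus\big(R_I(S)\cup\mathit{pre}^*(R_{II}(S))\big)$; the type IV region determined by $S$ is $D(S)$ if $D(S)$ is infinite and $\emptyset$ otherwise. A region of $\mathcal{A}$ is any of these sets. *)

From HB Require Import structures.
From mathcomp Require Import all_boot all_order all_algebra.
Set Implicit Arguments. Unset Strict Implicit. Unset Printing Implicit Defensive.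
Import Order.TTheory GRing.Theory Num.Theory.

Definition updates : seq int := [:: (-1)%R; 0%R; 1%R].

(* A one-dimensional pVASS: rules gamma (as a boolean relation p kappa q)
   and weights W (only relevant on rules). *)
Record pVASS1 (Q : finType) := PVASS1 {
  gamma : Q -> int -> Q -> bool;
  W : Q -> int -> Q -> nat
}.

Section PVASS.
Variable Q : finType.
Variable A : pVASS1 Q.

Definition qedge (p q : Q) : bool := has (fun k => gamma A p k q) updates.

Definition wf : Prop :=
  [/\ (forall p k q, gamma A p k q -> k \in updates),
      (forall p k q, gamma A p k q -> (0 < W A p k q)%N),
      (forall p k k' q, gamma A p k q -> gamma A p k' q -> k = k') &
      (forall p q : Q, connect (fun x y => qedge x y || qedge y x) p q)].

Definition cfg := (Q * nat)%type.

Definition enabled (k : int) (n : nat) : bool := ~~ ((k == (-1)%R) && (n == 0%N)).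

Definition Tot (p : Q) (n : nat) : nat :=
  \sum_(q : Q) \sum_(k <- updates | gamma A p k q && enabled k n) W A p k q.

Definition probM (c c' : cfg) : rat :=
  let: (p, n) := c in let: (q, n') := c' in
  if Tot p n == 0%N then ((p == q) && (n == n'))%:R%R
  else ((\sum_(k <- updates | [&& gamma A p k q, enabled k n
                                  & (n'%:Z == n%:Z + k)%R]) W A p k q)%:R%R
        / (Tot p n)%:R%R)%R.

Definition step (c c' : cfg) : Prop := (0 < probM c c')%R.

Fixpoint reachN (m : nat) (c c' : cfg) : Prop :=
  match m with
  | 0 => c = c'
  | m.+1 => exists c'', step c c'' /\ reachN m c'' c'
  end.

Definition reach (c c' : cfg) : Prop := exists m, reachN m c c'.
Definition reach_within (m : nat) (c c' : cfg) : Prop :=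
  exists i, (i <= m)%N /\ reachN i c c'.

Definition post_star (X : cfg -> Prop) : cfg -> Prop :=
  fun c' => exists c, X c /\ reach c c'.
Definition pre_star (X : cfg -> Prop) : cfg -> Prop :=
  fun c => exists c', X c' /\ reach c c'.

Definition finite_set (X : cfg -> Prop) : Prop :=
  exists s : seq cfg, forall c, X c -> c \in s.
Definition subset_cfg (X Y : cfg -> Prop) : Prop := forall c, X c -> Y c.

(* the finite Markov chain C_A on Q (convention: self-loop if no outgoing rule) *)
Definition TotQ (p : Q) : nat :=
  \sum_(q : Q) \sum_(k <- updates | gamma A p k q) W A p k q.
Definition probC (p q : Q) : rat :=
  if TotQ p == 0%N then (p == q)%:R%R
  else ((\sum_(k <- updates | gamma A p k q) W A p k q)%:R%R / (TotQ p)%:R%R)%R.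
Definition cedge (p q : Q) : bool := (0 < probC p q)%R.

Definition BSCC (S : {set Q}) : Prop :=
  [/\ S != set0,
      (forall p q, p \in S -> q \in S -> connect cedge p q) &
      (forall p q, p \in S -> cedge p q -> q \in S)].

Definition zero_cfg (p : Q) : cfg -> Prop := fun c => c = (p, 0%N).

Definition regionI (p : Q) (c : cfg) : Prop :=
  [/\ finite_set (post_star (zero_cfg p)),
      subset_cfg (post_star (zero_cfg p)) (pre_star (zero_cfg p)) &
      post_star (zero_cfg p) c].

Definition regionII (p : Q) (c : cfg) : Prop :=
  [/\ ~ finite_set (post_star (zero_cfg p)),
      subset_cfg (post_star (zero_cfg p)) (pre_star (zero_cfg p)) &
      post_star (zero_cfg p) c].

Definition regionIII (S : {set Q}) (c : cfg) : Prop :=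
  [/\ c.1 \in S, (1 <= c.2)%N & ~ (exists q, reach c (q, 0%N))].

Definition R_I (S : {set Q}) (c : cfg) : Prop := exists p, p \in S /\ regionI p c.
Definition R_II (S : {set Q}) (c : cfg) : Prop := exists p, p \in S /\ regionII p c.

Definition D (S : {set Q}) (c : cfg) : Prop :=
  [/\ c.1 \in S, pre_star (R_I S) c, ~ R_I S c & ~ pre_star (R_II S) c].

Definition regionIV (S : {set Q}) (c : cfg) : Prop :=
  ~ finite_set (D S) /\ D S c.

Definition in_some_region (c : cfg) : Prop :=
  (exists p, regionI p c) \/
  (exists S p, [/\ BSCC S, p \in S & regionII p c]) \/
  (exists S, BSCC S /\ regionIII S c) \/
  (exists S, BSCC S /\ regionIV S c).

End PVASS.

(* From a configuration with a counter below 3|Q| one either reaches a region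
   while the counter stays below 3|Q| -- and then a shortest such run visits
   each of the |Q|(3|Q|+1) configurations at most once -- or one reaches a
   counter of at least 3|Q|.  From a counter m >= 3|Q| one moves, in fewer than
   |Q| steps and losing less than |Q|, into a bottom SCC S of the chain C_A.
   If zero is unreachable from there, this is a type III region.  Otherwise a
   run down to zero must contain a negative cycle: a loop at some state x
   lowering the counter by e > 0 without ever dipping more than |Q| below its
   start.  It can be replayed from every counter >= |Q|, so every configuration
   of S can reach zero, and after fewer than |Q| further steps one is at some
   (x, k) with k >= |Q|.  Such a configuration lies in a type II region if it
   can reach one (an unbounded recurrent region is pumped back down along the
   cycle), in a type I region, or else in D(S); pumping up along the cycle then
   shows that D(S) is unbounded, i.e. a type IV region.  Altogether
   |Q|(3|Q|+1) + 2|Q| <= 11|Q|^4 steps suffice. *)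

From mathcomp Require Import all_boot all_algebra zify.
From Stdlib Require Import Classical ClassicalEpsilon.
Set Implicit Arguments. Unset Strict Implicit. Unset Printing Implicit Defensive.
Import GRing.Theory Num.Theory.

Definition asbool (P : Prop) : bool :=
  if excluded_middle_informative P then true else false.

Lemma asboolP (P : Prop) : reflect P (asbool P).
Proof. by rewrite /asbool; case: excluded_middle_informative => H; constructor. Qed.

Lemma sum_nat_seq_gt0 (I : Type) (r : seq I) (P : pred I) (F : I -> nat) :
  (0 < \sum_(i <- r | P i) F i) = has (fun i => P i && (0 < F i)) r.
Proof. by rewrite lt0n sum_nat_seq_neq0; apply: eq_has => i; rewrite lt0n. Qed.

Lemma leq_sum_seq_mem (I : eqType) (r : seq I) (P : pred I) (F : I -> nat) i :
  i \in r -> P i -> F i <= \sum_(j <- r | P j) F j.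
Proof. by move=> Hi Pi; rewrite (big_rem i Hi) Pi leq_addr. Qed.

Lemma connect_bottom (T : finType) (e : rel T) x :
  exists2 y, connect e x y & forall z, connect e y z -> connect e z y.
Proof.
have [N] := ubnP #|[set z | connect e x z]|; elim: N x => // N IHN x /ltnSE HN.
case: (boolP [exists z, connect e x z && ~~ connect e z x]); last first.
  by move=> /existsPn Hx; exists x => // z Cxz; move: (Hx z); rewrite Cxz negbK.
case/existsP => z /andP [Cxz NCzx].
have Hlt : #|[set w | connect e z w]| < #|[set w | connect e x w]|.
  apply/proper_card/properP; split.
    by apply/subsetP => w; rewrite !inE; apply: connect_trans.
  by exists x; rewrite !inE ?connect0.
have [y Czy Hy] := IHN z (leq_trans Hlt HN).
by exists y => //; apply: connect_trans Czy.
Qed.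

Lemma connect_short_path (T : finType) (e : rel T) x y : connect e x y ->
  exists s, [/\ path e x s, last x s = y & size s < #|T|].
Proof.
case/connectP => s Ps ->; case: (shortenP Ps) => s' Ps' /card_uniqP Us' _.
by exists s'; split => //; move: (max_card (mem (x :: s'))); rewrite Us'.
Qed.

Section Configurations.
Variable Q : finType.

Lemma cfg_bounded_finite (X : cfg Q -> Prop) B :
  (forall c, X c -> c.2 < B) -> finite_set X.
Proof.
move=> HB; exists [seq (q, i) | q <- enum Q, i <- iota 0 B] => -[q i] Xc.
by apply: allpairs_f; rewrite ?mem_enum // mem_iota add0n (HB _ Xc).
Qed.

Lemma cfg_infinite_unbounded (X : cfg Q -> Prop) B :
  ~ finite_set X -> exists c, X c /\ B <= c.2.
Proof.
move=> Hinf; apply: NNPP => Hsmall; apply/Hinf/(@cfg_bounded_finite _ B) => c Xc.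
by rewrite ltnNge; apply/negP => HBc; apply: Hsmall; exists c.
Qed.

Lemma cfg_finite_bounded (X : cfg Q -> Prop) :
  finite_set X -> exists B, forall c, X c -> c.2 <= B.
Proof.
case=> s Hs; exists (\max_(u <- s) u.2) => c Xc.
exact: (@leq_bigmax_seq _ s xpredT (fun u : cfg Q => u.2) c (Hs c Xc)).
Qed.

Lemma uniq_cfg_size_bounded K (s : seq (cfg Q)) :
  uniq s -> all (fun u : cfg Q => u.2 <= K) s -> size s <= #|Q| * K.+1.
Proof.
move=> Us /allP Hs.
have Hsub : {subset s <= [seq (q, i) | q <- enum Q, i <- iota 0 K.+1]}.
  by move=> -[q i] Hqi; apply: allpairs_f; rewrite ?mem_enum // mem_iota ltnS (Hs _ Hqi).
by move: (uniq_leq_size Us Hsub); rewrite size_allpairs size_iota -cardE.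
Qed.

End Configurations.

Section OneDimensionalPVASS.
Variable Q : finType.
Variable A : pVASS1 Q.
Hypothesis wfA : wf A.

Local Notation cfg := (cfg Q).
Local Notation step := (step A).
Local Notation reachN := (reachN A).
Local Notation reach := (reach A).
Local Notation reach_within := (reach_within A).

Lemma rule_update p k q : gamma A p k q -> k \in updates.
Proof. by case: wfA => H _ _ _; apply: H. Qed.

Lemma rule_update_range p k q : gamma A p k q -> (-1 <= k)%R /\ (k <= 1)%R.
Proof. by move/rule_update; rewrite !inE => /or3P [] /eqP ->. Qed.

Lemma rule_weight_gt0 p k q : gamma A p k q -> 0 < W A p k q.
Proof. by case: wfA => _ H _ _; apply: H. Qed.

Lemma weight_le_Tot p n k q : gamma A p k q -> enabled k n -> W A p k q <= Tot A p n.
Proof.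
move=> G E; rewrite /Tot (bigD1 q) //=; apply: leq_trans (leq_addr _ _).
by apply: leq_sum_seq_mem (rule_update G) _; rewrite G E.
Qed.

Lemma weight_le_TotQ p k q : gamma A p k q -> W A p k q <= TotQ A p.
Proof.
move=> G; rewrite /TotQ (bigD1 q) //=; apply: leq_trans (leq_addr _ _).
exact: leq_sum_seq_mem (rule_update G) G.
Qed.

Lemma Tot_le_TotQ p n : Tot A p n <= TotQ A p.
Proof.
apply: leq_sum => q _; rewrite big_mkcond [X in _ <= X]big_mkcond /=.
apply: leq_sum => k _.
by case: (gamma A p k q); case: (enabled k n).
Qed.

Lemma enabled_gt0 k n : 0 < n -> enabled k n.
Proof. by rewrite /enabled; case: n => // n _; rewrite andbF. Qed.

Lemma enabled_addn k n j : enabled k n -> enabled k (n + j).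
Proof. by rewrite /enabled addn_eq0; apply: contra => /and3P [-> -> _]. Qed.

Lemma stepP p n q n' : step (p, n) (q, n') <->
  (Tot A p n = 0 /\ p = q /\ n = n') \/
  (exists k, [/\ gamma A p k q, enabled k n & (n'%:Z = n%:Z + k)%R]).
Proof.
rewrite /step /probM /=; case: eqP => HT.
  rewrite ltr0n lt0b; split; first by case/andP => /eqP <- /eqP <-; left.
  case=> [[_ [-> ->]]|[k [G E _]]]; first by rewrite !eqxx.
  by move: (weight_le_Tot G E) (rule_weight_gt0 G); rewrite HT leqn0 => /eqP ->.
rewrite ltr_pdivlMr ?ltr0n ?lt0n; last exact/eqP.
rewrite mul0r ltr0n sum_nat_seq_gt0; split.
  by case/hasP => k _ /andP [/and3P [G E /eqP H] _]; right; exists k.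
case=> [[]|[k [G E H]]] //; apply/hasP; exists k; first exact: rule_update G.
by rewrite G E H eqxx rule_weight_gt0.
Qed.

Lemma step_of_rule p k q n : gamma A p k q -> 0 < n ->
  exists n', step (p, n) (q, n') /\ (n'%:Z = n%:Z + k)%R.
Proof.
move=> G Hn; have [lo _] := rule_update_range G.
exists `|(n%:Z + k)%R|%N; split; last by lia.
by apply/stepP; right; exists k; split; [| exact: enabled_gt0 | lia].
Qed.

Lemma step_counter p n q n' : step (p, n) (q, n') -> n <= n'.+1 /\ n' <= n.+1.
Proof.
case/stepP => [[_ [_ ->]]|[k [G _ H]]]; first by lia.
by have := rule_update_range G; lia.
Qed.

Lemma reachN_cat L1 L2 c d e : reachN L1 c d -> reachN L2 d e -> reachN (L1 + L2) c e.
Proof.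
elim: L1 c => [|L1 IH] c /=; first by move=> ->.
by case=> c' [S R] Rde; exists c'; split => //; apply: IH R Rde.
Qed.

Lemma reach_refl c : reach c c.
Proof. by exists 0. Qed.

Lemma reach_trans c d e : reach c d -> reach d e -> reach c e.
Proof. by move=> [L1 R1] [L2 R2]; exists (L1 + L2); apply: reachN_cat R1 R2. Qed.

Lemma step_reach c d : step c d -> reach c d.
Proof. by move=> S; exists 1, d. Qed.

Lemma reach_within_trans m1 m2 c d e :
  reach_within m1 c d -> reach_within m2 d e -> reach_within (m1 + m2) c e.
Proof.
move=> [L1 [HL1 R1]] [L2 [HL2 R2]]; exists (L1 + L2).
by split; [apply: leq_add | apply: reachN_cat R1 R2].
Qed.

Lemma reach_within_mono m1 m2 c d : m1 <= m2 -> reach_within m1 c d -> reach_within m2 c d.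
Proof. by move=> Hm [L [HL R]]; exists L; split => //; apply: leq_trans Hm. Qed.

Lemma reach_within_reach m c d : reach_within m c d -> reach c d.
Proof. by case=> L [_ R]; exists L. Qed.

Lemma reach_shift_up j p n q n' : reach (p, n) (q, n') -> reach (p, n + j) (q, n' + j).
Proof.
case=> L; elim: L p n => [|L IH] p n /=; first by case=> -> ->; apply: reach_refl.
case=> -[r m] [S /IH {}IH]; case/stepP: S => [[_ [-> ->]] //|[k [G E H]]].
apply: reach_trans IH; apply: step_reach; apply/stepP; right; exists k.
by split => //; [apply: enabled_addn | lia].
Qed.

(* [P] constrains every configuration of the run except the last one. *)
Fixpoint reachN_in (P : cfg -> Prop) (L : nat) (c d : cfg) : Prop :=
  match L with
  | 0 => c = d
  | L.+1 => P c /\ exists c', step c c' /\ reachN_in P L c' d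
  end.

Lemma reachN_in_reachN P L c d : reachN_in P L c d -> reachN L c d.
Proof.
elim: L c => [|L IH] c //= [_ [c' [S R]]]; exists c'; split => //; exact: IH.
Qed.

Lemma reachN_in_setT L c d : reachN L c d -> reachN_in (fun _ => True) L c d.
Proof.
elim: L c => [|L IH] c //= [c' [S R]]; split => //; exists c'; split => //; exact: IH.
Qed.

Lemma reachN_in_mono (P P' : cfg -> Prop) L c d :
  (forall u, P u -> P' u) -> reachN_in P L c d -> reachN_in P' L c d.
Proof.
move=> HP; elim: L c => [|L IH] c //= [Pc [c' [S R]]]; split; first exact: HP.
by exists c'; split => //; apply: IH.
Qed.

Lemma reachN_in_head P L c d : reachN_in P L c d -> P d -> P c.
Proof. by case: L => [|L] /=; [move=> -> | case]. Qed.

Lemma reachN_in_cat P L1 L2 c d e :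
  reachN_in P L1 c d -> reachN_in P L2 d e -> reachN_in P (L1 + L2) c e.
Proof.
elim: L1 c => [|L1 IH] c /=; first by move=> ->.
by case=> Pc [c' [S R]] Rde; split => //; exists c'; split => //; apply: IH R Rde.
Qed.

Lemma reachN_in_first_hit (P R : cfg -> Prop) L c d : reachN_in P L c d ->
  reachN_in (fun u => P u /\ ~ R u) L c d \/
  exists e L1 L2, [/\ R e, reachN_in (fun u => P u /\ ~ R u) L1 c e,
                      reachN_in P L2 e d & L1 + L2 = L].
Proof.
elim: L c => [|L IH] c /=; first by left.
case=> Pc [c' [S Rc']]; case: (classic (R c)) => Rc.
  by right; exists c, 0, L.+1; split => //=; split => //; exists c'.
case: (IH c' Rc') => [Hc'|[e [L1 [L2 [Re R1 R2 <-]]]]].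
  by left; split => //; exists c'.
by right; exists e, L1.+1, L2; split => //; split => //; exists c'.
Qed.

Lemma reach_shift_down j L p n q n' :
  reachN_in (fun u => j <= u.2) L (p, n) (q, n') -> j <= n' ->
  reach (p, n - j) (q, n' - j).
Proof.
elim: L p n => [|L IH] p n /=; first by case=> -> -> _; apply: reach_refl.
case=> Hj [[r m] [S R]] Hjn'; have Hjm : j <= m := reachN_in_head R Hjn'.
apply: reach_trans (IH _ _ R Hjn'); case/stepP: S => [[_ [<- <-]]|[k [G _ H]]].
  exact: reach_refl.
apply: step_reach; apply/stepP; right; exists k; split => //; last by lia.
by rewrite /enabled subn_eq0; case: (k =P (-1)%R) => //= Ek; rewrite -ltnNge; lia.
Qed.

Definition zero_reachable (c : cfg) : Prop := exists r, reach c (r, 0).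

Lemma zero_reachable_le p m m' : m' <= m -> zero_reachable (p, m) -> zero_reachable (p, m').
Proof.
move=> Hm [r [L HL]]; elim: L p m m' Hm HL => [|L IH] p m m' Hm /=.
  by case=> _ Em; move: Hm; rewrite Em leqn0 => /eqP ->; exists p; apply: reach_refl.
case=> -[q n] [S R]; case: (posnP m') => [->|Hm']; first by exists p; apply: reach_refl.
case/stepP: S => [[_ [Eq En]]|[k [G _ H]]]; first by subst; apply: IH Hm R.
have [n' [S' Hn']] := step_of_rule G Hm'.
have [r' Hr'] := IH q n n' ltac:(lia) R.
by exists r'; apply: reach_trans Hr'; apply: step_reach.
Qed.

Lemma rule_cedge p k q : gamma A p k q -> cedge A p q.
Proof.
move=> G; have HW := rule_weight_gt0 G; rewrite /cedge /probC.
have HT : 0 < TotQ A p := leq_trans HW (weight_le_TotQ G).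
rewrite eqn0Ngt HT /= ltr_pdivlMr ?ltr0n // mul0r ltr0n.
exact: leq_trans HW (leq_sum_seq_mem _ (rule_update G) G).
Qed.

Lemma step_cedge p n q n' : step (p, n) (q, n') -> p = q \/ cedge A p q.
Proof. by case/stepP => [[_ [-> _]]|[k [G _ _]]]; [left | right; apply: rule_cedge G]. Qed.

Lemma cedge_step p q n : cedge A p q -> 0 < n ->
  exists n', step (p, n) (q, n') /\ n <= n'.+1.
Proof.
move=> + Hn; rewrite /cedge /probC; case: eqP => HT.
  rewrite ltr0n lt0b => /eqP <-; exists n; split => //; apply/stepP; left.
  by split => //; apply/eqP; rewrite -leqn0 -HT Tot_le_TotQ.
rewrite ltr_pdivlMr ?ltr0n ?lt0n; last exact/eqP.
rewrite mul0r ltr0n sum_nat_seq_gt0 => /hasP [k _ /andP [G _]].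
have [n' [S Hn']] := step_of_rule G Hn; exists n'; split => //.
by have := rule_update_range G; lia.
Qed.

Lemma BSCC_reach_closed S c d : BSCC A S -> reach c d -> c.1 \in S -> d.1 \in S.
Proof.
case=> _ _ HS [L]; elim: L c => [|L IH] c /=; first by move=> <-.
case=> c' [St R] Hc; apply: (IH c' R) => {R}; case: c c' St Hc => p n [q n'] /step_cedge /=.
by case=> [<- //|E Hp]; apply: HS Hp E.
Qed.

Lemma BSCC_below p : exists S s, [/\ BSCC A S, s \in S & connect (cedge A) p s].
Proof.
have [s Cps Hs] := connect_bottom (cedge A) p.
exists [set y | connect (cedge A) s y], s; split => //; last by rewrite inE connect0.
split.
- by apply/set0Pn; exists s; rewrite inE connect0.
- by move=> x y; rewrite !inE => Hx Hy; apply: connect_trans (Hs _ Hx) Hy.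
- by move=> x y; rewrite !inE => Hx Exy; apply: connect_trans Hx (connect1 Exy).
Qed.

Lemma cedge_path_run p s m : path (cedge A) p s -> size s <= m ->
  exists m', reachN (size s) (p, m) (last p s, m') /\ m <= m' + size s.
Proof.
elim: s p m => [|q s IH] p m /=; first by move=> _ _; exists m; rewrite addn0.
case/andP => E Ps Hs; have [n [S Hn]] := cedge_step E (leq_trans (ltn0Sn _) Hs).
have [m' [R Hm']] := IH q n Ps ltac:(lia).
by exists m'; split; [exists (q, n) | lia].
Qed.

Lemma cedge_path_run_nonzero p s m : path (cedge A) p s -> ~ zero_reachable (p, m) ->
  exists m', reachN (size s) (p, m) (last p s, m') /\ ~ zero_reachable (last p s, m').
Proof.
elim: s p m => [|q s IH] p m /=; first by move=> _ HZ; exists m.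
case/andP => E Ps HZ; have Hm : 0 < m.
  by rewrite lt0n; apply/eqP => Em; apply: HZ; exists p; rewrite Em; apply: reach_refl.
have [n [S _]] := cedge_step E Hm.
have HZn : ~ zero_reachable (q, n).
  by case=> r Hr; apply: HZ; exists r; apply: reach_trans (step_reach S) Hr.
by have [m' [R HZ']] := IH q n Ps HZn; exists m'; split; first exists (q, n).
Qed.

Lemma cedge_connect_reach p q m : connect (cedge A) p q -> #|Q| <= m ->
  exists m', reach_within #|Q| (p, m) (q, m') /\ m < m' + #|Q|.
Proof.
case/connect_short_path => s [Ps <- Hs] Hm.
have [m' [R Hm']] := cedge_path_run Ps (leq_trans (ltnW Hs) Hm).
by exists m'; split; [exists (size s); split => //; apply: ltnW | lia].
Qed.

Lemma regionIII_within c : ~ zero_reachable c ->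
  exists d, reach_within #|Q| c d /\ in_some_region A d.
Proof.
case: c => p m HZ; have [S [s [HS Hs /connect_short_path [s' [Ps Ls Hs']]]]] := BSCC_below p.
have [k [R HZk]] := cedge_path_run_nonzero Ps HZ; rewrite Ls in R HZk.
exists (s, k); split; first by exists (size s'); split => //; apply: ltnW.
right; right; left; exists S; split => //; split => //.
by rewrite lt0n; apply/eqP => /= Ek; apply: HZk; exists s; rewrite Ek; apply: reach_refl.
Qed.

Definition small_drop (n L : nat) (c d : cfg) : Prop :=
  reachN_in (fun u => c.2 < u.2 + n) L c d /\ c.2 <= d.2 + n.

Definition neg_cycle (x : Q) (a b : nat) : Prop :=
  [/\ b < a, a <= b + #|Q| &
      exists L, reachN_in (fun u => a <= u.2 + #|Q|) L (x, a) (x, b)].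

Definition through_neg_cycle (c d : cfg) : Prop :=
  exists x a b, [/\ reach c (x, a), neg_cycle x a b & reach (x, b) d].

Lemma through_neg_cycle_pre c c' d :
  reach c c' -> through_neg_cycle c' d -> through_neg_cycle c d.
Proof.
by move=> Hc [x [a [b [Ha Hab Hb]]]]; exists x, a, b; split => //; apply: reach_trans Hc Ha.
Qed.

Lemma through_neg_cycle_post c d d' :
  through_neg_cycle c d -> reach d d' -> through_neg_cycle c d'.
Proof.
by move=> [x [a [b [Ha Hab Hb]]]] Hd; exists x, a, b; split => //; apply: reach_trans Hb Hd.
Qed.

Lemma small_drop_refl n c : small_drop n 0 c c.
Proof. by split => //; apply: leq_addr. Qed.

Lemma small_drop_cons n L c c' d :
  step c c' -> small_drop n L c' d -> small_drop n.+1 L.+1 c d.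
Proof.
case: c c' => p m [q m'] S [R Hd]; have [Sm _] := step_counter S.
split; last by rewrite /= in Hd *; lia.
split; first by rewrite /=; lia.
by exists (q, m'); split => //; apply: reachN_in_mono R => u /=; lia.
Qed.

Lemma small_drop_cat n L1 L2 c e d :
  small_drop n L1 c e -> small_drop n L2 e d -> c.2 <= e.2 -> small_drop n (L1 + L2) c d.
Proof.
move=> [R1 _] [R2 Hd] Hce; split; last by lia.
by apply: reachN_in_cat R1 (reachN_in_mono _ R2) => u; lia.
Qed.

Lemma small_drop_neg_cycle n L x a b :
  n <= #|Q| -> b < a -> small_drop n L (x, a) (x, b) -> neg_cycle x a b.
Proof.
move=> Hn Hab [R Hb]; split => //; first by rewrite /= in Hb; lia.
by exists L; apply: reachN_in_mono R => u /= Hu; apply: ltnW (leq_trans Hu _); rewrite leq_add2l.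
Qed.

(* Induction on the set [V] of visited states: split the run at the first
   return to its initial state [q]; both pieces avoid [q] or are shorter. *)
Lemma small_drop_or_neg_cycle (V : {set Q}) L c d :
  reachN_in (fun u => u.1 \in V) L c d -> small_drop #|V| L c d \/ through_neg_cycle c d.
Proof.
move: L c d; have [N] := ubnP #|V|; elim: N V => // N IHN V /ltnSE HVN.
elim/ltn_ind => L IHL [q m] d; case: L IHL => [|L] IHL /=.
  by move=> <-; left; apply: small_drop_refl.
case=> /= Hq [c' [S R]].
have HV : #|V| = (#|V :\ q|).+1 by rewrite (cardsD1 q V) Hq.
have {}IHN := IHN (V :\ q) ltac:(by rewrite HV in HVN).
have HVq (u : cfg) : u.1 \in V /\ u.1 <> q -> u.1 \in V :\ q.
  by case=> Hu /eqP Huq; rewrite in_setD1 Huq.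
case: (reachN_in_first_hit (fun u => u.1 = q) R) => [R'|[[q' m'] [L1 [L2 [/= Eq R1 R2 HL]]]]].
  case: (IHN _ _ _ (reachN_in_mono HVq R')) => [Hd|Hneg].
    by left; rewrite HV; apply: small_drop_cons S Hd.
  by right; apply: through_neg_cycle_pre (step_reach S) Hneg.
subst q'; have HR2 : reach (q, m') d by exists L2; apply: reachN_in_reachN R2.
case: (IHN _ _ _ (reachN_in_mono HVq R1)) => [Hd1|Hneg]; last first.
  right; apply: through_neg_cycle_pre (step_reach S) _.
  exact: through_neg_cycle_post Hneg HR2.
have {}Hd1 : small_drop #|V| L1.+1 (q, m) (q, m') by rewrite HV; apply: small_drop_cons S Hd1.
case: (ltnP m' m) => Hm'.
  right; exists q, m, m'; split => //; first exact: reach_refl.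
  exact: small_drop_neg_cycle (max_card _) Hm' Hd1.
case: (IHL L2 ltac:(lia) (q, m') d R2) => [Hd2|Hneg].
  by left; rewrite -HL -addSn; apply: small_drop_cat Hd1 Hd2 Hm'.
by right; apply: through_neg_cycle_pre Hneg; exists L1.+1; apply: reachN_in_reachN (proj1 Hd1).
Qed.

Lemma zero_run_neg_cycle p m r : reach (p, m) (r, 0) -> #|Q| < m ->
  through_neg_cycle (p, m) (r, 0).
Proof.
case=> L /reachN_in_setT R Hm.
have /small_drop_or_neg_cycle : reachN_in (fun u => u.1 \in [set: Q]) L (p, m) (r, 0).
  by apply: reachN_in_mono R => u _; rewrite inE.
by case=> // -[_]; rewrite cardsT add0n => Hdrop; rewrite ltnNge Hdrop in Hm.
Qed.

Definition descends (x : Q) (e k0 : nat) : Prop :=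
  forall k, k0 <= k -> reach (x, k) (x, k - e).

Lemma neg_cycle_reach x a b : neg_cycle x a b -> reach (x, a) (x, b).
Proof. by case=> _ _ [L R]; exists L; apply: reachN_in_reachN R. Qed.

(* The cycle stays above [a - #|Q|], so it can be replayed from counter [#|Q|]
   (or from [a] if [a <= #|Q|]) and from any larger value. *)
Lemma neg_cycle_descends x a b : neg_cycle x a b ->
  exists e k0, [/\ 0 < e, k0 <= #|Q|, k0 <= a & descends x e k0].
Proof.
move=> Hcyc; have Hxab := neg_cycle_reach Hcyc; case: Hcyc => Hab HaQ [L R].
exists (a - b); case: (leqP a #|Q|) => Ha.
  exists a; split; rewrite ?subn_gt0 // => k Hk; have := reach_shift_up (k - a) Hxab.
  have -> : a + (k - a) = k by lia.
  by have -> : b + (k - a) = k - (a - b) by lia.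
have Hdown : reach (x, a - (a - #|Q|)) (x, b - (a - #|Q|)).
  by apply: reach_shift_down (reachN_in_mono _ R) _ => [u|]; lia.
exists #|Q|; split; rewrite ?subn_gt0 ?(ltnW Ha) // => k Hk.
have := reach_shift_up (k - #|Q|) Hdown.
have -> : a - (a - #|Q|) + (k - #|Q|) = k by lia.
by have -> : b - (a - #|Q|) + (k - #|Q|) = k - (a - b) by lia.
Qed.

Lemma descends_iter x e k0 k j : descends x e k0 -> k0 <= k -> reach (x, k + j * e) (x, k).
Proof.
move=> Hd Hk; elim: j => [|j IH]; first by rewrite mul0n addn0; apply: reach_refl.
apply: reach_trans IH; have := Hd (k + j.+1 * e) (leq_trans Hk (leq_addr _ _)).
by rewrite mulSn addnCA addKn.
Qed.

Lemma reach_iter_shift x k D j : reach (x, k) (x, k + D) -> reach (x, k) (x, k + j * D).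
Proof.
move=> HD; elim: j => [|j IH]; first by rewrite mul0n addn0; apply: reach_refl.
by apply: reach_trans HD _; rewrite mulSnr addnA; apply: reach_shift_up.
Qed.

(* Repeating the increase [e] times and descending [D] times by [e] undoes it. *)
Lemma descends_return x e k0 k D : 0 < e -> descends x e k0 -> k0 <= k ->
  reach (x, k) (x, k + D) -> reach (x, k + D) (x, k).
Proof.
move=> He Hd Hk HD; have := reach_shift_up D (reach_iter_shift e.-1 HD).
rewrite -addnA -mulSnr prednK // mulnC => /reach_trans; apply.
exact: descends_iter Hd Hk.
Qed.

Lemma descends_zero_reachable x e k0 a : 0 < e -> descends x e k0 -> k0 <= a ->
  zero_reachable (x, a) -> forall k, zero_reachable (x, k).
Proof.
move=> He Hd Ha [r Hr] k; apply: (@zero_reachable_le x (a + k * e)).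
  exact: leq_trans (leq_pmulr k He) (leq_addl _ _).
by exists r; apply: reach_trans (descends_iter k Hd Ha) Hr.
Qed.

Lemma BSCC_zero_reachable S x y k : BSCC A S -> x \in S -> y \in S ->
  (forall k, zero_reachable (x, k)) -> zero_reachable (y, k).
Proof.
case=> _ HS _ Hx Hy Hall.
have [m' [Hyx _]] := cedge_connect_reach (m := k + #|Q|) (HS _ _ Hy Hx) (leq_addl _ _).
apply: (@zero_reachable_le y (k + #|Q|)); first exact: leq_addr.
by have [r Hr] := Hall m'; exists r; apply: reach_trans (reach_within_reach Hyx) Hr.
Qed.

Lemma post_star_zeroP p c : post_star A (zero_cfg p) c <-> reach (p, 0) c.
Proof. by split => [[c0 [-> H]] //|H]; exists (p, 0). Qed.

Lemma pre_star_zeroP p c : pre_star A (zero_cfg p) c <-> reach c (p, 0).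
Proof. by split => [[c0 [-> H]] //|H]; exists (p, 0). Qed.

Definition zero_bottom (t : Q) : Prop :=
  forall r, reach (t, 0) (r, 0) -> reach (r, 0) (t, 0).

Lemma zero_reachable_bottom c : zero_reachable c -> exists t, reach c (t, 0) /\ zero_bottom t.
Proof.
pose zstep : rel Q := fun a b => asbool (reach (a, 0) (b, 0)).
have zstepP a b : connect zstep a b -> reach (a, 0) (b, 0).
  case/connectP => s; elim: s a => [|b' s IH] a /=; first by move=> _ ->; apply: reach_refl.
  by case/andP => /asboolP Hab' /IH Hb'b /Hb'b; apply: reach_trans Hab'.
case=> r Hr; have [t Crt Bt] := connect_bottom zstep r.
exists t; split; first exact: reach_trans Hr (zstepP _ _ Crt).
by move=> r' Htr'; apply/zstepP/Bt/connect1/asboolP.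
Qed.

Lemma zero_bottom_recurrent t : zero_bottom t ->
  (forall v, reach (t, 0) v -> zero_reachable v) ->
  subset_cfg (post_star A (zero_cfg t)) (pre_star A (zero_cfg t)).
Proof.
move=> Bt HZ v /post_star_zeroP Htv; apply/pre_star_zeroP.
by have [r Hr] := HZ v Htv; apply: reach_trans Hr (Bt _ (reach_trans Htv Hr)).
Qed.

Lemma regionI_bounded : exists M, forall p c, regionI A p c -> c.2 <= M.
Proof.
have HB p : exists B, forall c, regionI A p c -> c.2 <= B.
  case: (classic (finite_set (post_star A (zero_cfg p)))) => [/cfg_finite_bounded [B HB]|Hinf].
    by exists B => c [_ _ /HB].
  by exists 0 => c [].
pose B p := proj1_sig (constructive_indefinite_description _ (HB p)).
exists (\max_p B p) => p c Hc; apply: leq_trans _ (@leq_bigmax _ B p).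
exact: (proj2_sig (constructive_indefinite_description _ (HB p))) c Hc.
Qed.

(* An unbounded type II region reachable from [(x, k)] contains configurations
   [(x, M')] with [M' > k]; the descent of [x] brings them back to [(x, k)]. *)
Lemma pre_regionII_descends S x e k0 k : BSCC A S -> x \in S -> 0 < e ->
  descends x e k0 -> k0 <= k -> pre_star A (R_II A S) (x, k) -> R_II A S (x, k).
Proof.
move=> HS Hx He Hd Hk [c' [[t [Ht [Hinf Hrec /post_star_zeroP Htc']]] Hc']].
have [[y M] [/post_star_zeroP Hty /= HM]] := cfg_infinite_unbounded (k + 2 * #|Q|) Hinf.
have Hy : y \in S := BSCC_reach_closed HS Hty Ht.
have [_ HSc _] := HS.
have [M' [HyM' HM']] := cedge_connect_reach (m := M) (HSc _ _ Hy Hx) ltac:(rewrite /=; lia).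
have Hct : reach c' (t, 0) by apply/pre_star_zeroP/Hrec/post_star_zeroP.
have HkM : k <= M' by move: HM' => /=; lia.
have HtM' : reach (t, 0) (x, M') := reach_trans Hty (reach_within_reach HyM').
move: HtM'; rewrite -(subnKC HkM) => HtM'.
have Hup : reach (x, k) (x, k + (M' - k)) := reach_trans Hc' (reach_trans Hct HtM').
exists t; split => //; split => //; apply/post_star_zeroP.
exact: reach_trans HtM' (descends_return He Hd Hk Hup).
Qed.

(* Pumping [(x, k)] up along the cycle yields elements of D(S) with arbitrarily
   large counters. *)
Lemma descends_regionIV S x e k0 k : BSCC A S -> x \in S -> 0 < e ->
  descends x e k0 -> k0 <= k -> ~ pre_star A (R_II A S) (x, k) -> D A S (x, k) ->
  regionIV A S (x, k).
Proof.
move=> HS Hx He Hd Hk HnII HD; split => // /cfg_finite_bounded [B HB].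
have [M HM] := regionI_bounded.
have [j Hj] : exists j, M + B < k + j * e.
  by exists (M + B).+1; apply: leq_trans (leq_pmulr _ He) (leq_addl _ _).
have Hjk : reach (x, k + j * e) (x, k) := descends_iter j Hd Hk.
suff /HB : D A S (x, k + j * e) by rewrite /=; lia.
case: HD => _ [c [HIc Hkc]] _ _; split => //.
- by exists c; split => //; apply: reach_trans Hjk Hkc.
- by case=> p [_ /HM] /=; lia.
move=> HII; apply: HnII; exists (x, k); split; last exact: reach_refl.
have [t [Ht [Hinf Hrec /post_star_zeroP Htj]]] :=
  pre_regionII_descends HS Hx He Hd (leq_trans Hk (leq_addr _ _)) HII.
by exists t; split => //; split => //; apply/post_star_zeroP; apply: reach_trans Htj Hjk.
Qed.

Lemma descends_in_some_region S x e k0 k : BSCC A S -> x \in S -> 0 < e ->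
  descends x e k0 -> (forall y n, y \in S -> zero_reachable (y, n)) -> k0 <= k ->
  in_some_region A (x, k).
Proof.
move=> HS Hx He Hd HZ Hk.
case: (classic (pre_star A (R_II A S) (x, k))) => HII.
  have [t [Ht HtII]] := pre_regionII_descends HS Hx He Hd Hk HII.
  by right; left; exists S, t.
have [t [Hxt Bt]] := zero_reachable_bottom (HZ x k Hx).
have Ht : t \in S := BSCC_reach_closed HS Hxt Hx.
have Hrec : subset_cfg (post_star A (zero_cfg t)) (pre_star A (zero_cfg t)).
  by apply: (zero_bottom_recurrent Bt) => -[v n] Htv; exact: HZ _ _ (BSCC_reach_closed HS Htv Ht).
have Ht0 : post_star A (zero_cfg t) (t, 0) by apply/post_star_zeroP/reach_refl.
have Hfin : finite_set (post_star A (zero_cfg t)).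
  by apply: NNPP => Hinf; apply: HII; exists (t, 0); split => //; exists t.
case: (classic (R_I A S (x, k))) => [[p [_ HI]]|HnI]; first by left; exists p.
right; right; right; exists S; split => //.
apply: (descends_regionIV HS Hx He Hd Hk HII); split => //.
by exists (t, 0); split => //; exists t.
Qed.

Lemma large_counter_region p m : 3 * #|Q| <= m ->
  exists d, reach_within (2 * #|Q|) (p, m) d /\ in_some_region A d.
Proof.
move=> Hm; rewrite mul2n -addnn.
have [S [s [HS Hs Cps]]] := BSCC_below p.
have [m1 [R1 Hm1]] := cedge_connect_reach (m := m) Cps ltac:(lia).
case: (classic (zero_reachable (s, m1))) => [[r Hr]|HnZ]; last first.
  have [d [Hd Hreg]] := regionIII_within HnZ.
  by exists d; split => //; apply: reach_within_trans R1 Hd.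
have [x [a [b [Ha Hab Hb]]]] := zero_run_neg_cycle Hr ltac:(lia).
have Hx : x \in S := BSCC_reach_closed HS Ha Hs.
have [e [k0 [He Hk0 Hk0a Hd]]] := neg_cycle_descends Hab.
have HZx := descends_zero_reachable He Hd Hk0a (ex_intro _ r (reach_trans (neg_cycle_reach Hab) Hb)).
have HZS y n : y \in S -> zero_reachable (y, n).
  by move=> Hy; apply: BSCC_zero_reachable HS Hx Hy HZx.
have [_ HSc _] := HS.
have [m2 [R2 Hm2]] := cedge_connect_reach (m := m1) (HSc _ _ Hs Hx) ltac:(lia).
exists (x, m2); split; first exact: reach_within_trans R1 R2.
by apply: descends_in_some_region HS Hx He Hd HZS _; lia.
Qed.

(* Otherwise [post*(t, 0)] is a type I region, for a bottom zero configuration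
   [(t, 0)] reachable from [c]. *)
Lemma reach_region_or_high K c : exists d, reach c d /\ (in_some_region A d \/ K <= d.2).
Proof.
case: (classic (zero_reachable c)) => HZ; last first.
  have [d [Hd Hreg]] := regionIII_within HZ.
  by exists d; split; [apply: reach_within_reach Hd | left].
have [t [Hct Bt]] := zero_reachable_bottom HZ.
case: (classic (exists v, reach (t, 0) v /\ ~ zero_reachable v)) => [[v [Htv HvZ]]|HallZ].
  have [d [Hd Hreg]] := regionIII_within HvZ; exists d; split; last by left.
  exact: reach_trans Hct (reach_trans Htv (reach_within_reach Hd)).
case: (classic (exists v, reach (t, 0) v /\ K <= v.2)) => [[v [Htv HvK]]|Hlow].
  by exists v; split; [apply: reach_trans Hct Htv | right].
exists (t, 0); split => //; left; left; exists t; split.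
- apply: (@cfg_bounded_finite _ _ K) => v /post_star_zeroP Htv.
  by rewrite ltnNge; apply/negP => HvK; apply: Hlow; exists v.
- apply: (zero_bottom_recurrent Bt) => v Htv.
  by apply: NNPP => HvZ; apply: HallZ; exists v.
- exact/post_star_zeroP/reach_refl.
Qed.

Definition stepb : rel cfg := fun u v => asbool (step u v).

Lemma stepb_path_reachN c s : path stepb c s -> reachN (size s) c (last c s).
Proof.
by elim: s c => [|c' s IH] c //= /andP [/asboolP S /IH R]; exists c'.
Qed.

Lemma reach_first_hit (G : cfg -> Prop) K c d : reach c d -> G d -> c.2 <= K ->
  (forall u, ~ G u -> u.2 < K) ->
  exists s, [/\ path stepb c s, G (last c s) & all (fun u : cfg => u.2 <= K) (c :: s)].
Proof.
case=> L + Gd; elim: L c => [|L IH] c /=.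
  by move=> -> Hd _; exists [::]; split => //=; rewrite Hd.
case=> c' [S R] Hc HG; case: (classic (G c)) => Gc.
  by exists [::]; split => //=; rewrite Hc.
have Hc' : c'.2 <= K.
  by case: c c' S {Hc R} Gc => p n [q n'] /step_counter [_ Hn'] /HG /=; lia.
have [s [Ps Gs Hs]] := IH c' R Hc' HG.
exists (c' :: s); split => //=; last by rewrite Hc.
by rewrite Ps andbT; apply/asboolP.
Qed.

(* A shortest run that stays in [Q x [0, K]] visits each configuration once. *)
Lemma reach_within_box (G : cfg -> Prop) K c d : reach c d -> G d -> c.2 <= K ->
  (forall u, ~ G u -> u.2 < K) -> exists d', reach_within (#|Q| * K.+1) c d' /\ G d'.
Proof.
move=> Hcd Gd Hc HG; have [s [Ps Gs Hs]] := reach_first_hit Hcd Gd Hc HG.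
move: Gs; case: (shortenP Ps) => s' Ps' Us' Hsub Gs'.
exists (last c s'); split => //; exists (size s'); split; last exact: stepb_path_reachN Ps'.
apply: ltnW; apply: uniq_cfg_size_bounded Us' _; apply/allP => u Hu; apply: (allP Hs).
by move: Hu; rewrite !inE => /orP [->|/Hsub ->]; rewrite ?orbT.
Qed.

Lemma region_within c :
  exists d, reach_within (#|Q| * (3 * #|Q|).+1 + 2 * #|Q|) c d /\ in_some_region A d.
Proof.
case: c => p m; case: (leqP (3 * #|Q|) m) => Hm.
  have [d [Hd Hreg]] := large_counter_region p Hm.
  by exists d; split => //; apply: reach_within_mono Hd; apply: leq_addl.
have [d [Hcd Gd]] := reach_region_or_high (3 * #|Q|) (p, m).
have Hlow u : ~ (in_some_region A u \/ 3 * #|Q| <= u.2) -> u.2 < 3 * #|Q|.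
  by move=> Hu; rewrite ltnNge; apply/negP => Hhigh; apply: Hu; right.
have [[q n] [Hd' [Hreg|Hhigh]]] := reach_within_box Hcd Gd (ltnW Hm) Hlow.
  by exists (q, n); split => //; apply: reach_within_mono Hd'; apply: leq_addr.
have [d'' [Hd'' Hreg]] := large_counter_region q Hhigh.
by exists d''; split => //; apply: reach_within_trans Hd' Hd''.
Qed.

End OneDimensionalPVASS.

Theorem lemma1 (Q : finType) (A : pVASS1 Q) :
  wf A ->
  forall c : cfg Q,
    exists c' : cfg Q, reach_within A (11 * #|Q| ^ 4) c c' /\ in_some_region A c'.
Proof.
move=> wfA c; have [c' [Hc' Hreg]] := region_within wfA c.
exists c'; split => //; apply: reach_within_mono Hc'.
have : 0 < #|Q| by apply/card_gt0P; exists c.1.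
by set n := #|Q|; nia.
Qed.
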